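(* Let $q\neq0$ and let $D\subseteq\mathbb C\setminus\{0\}$ satisfy $qD\subseteq D$. Suppose that for each integer $n\ge-1$ we are given functions $\tilde{\mathcal F}(\cdot;n),\tilde{\mathcal G}(\cdot;n):D\to\mathbb C$ and constants $\tilde\mu(n)$, with $\tilde\mu(-1)=0$ and $\tilde{\mathcal G}(z;-1)\neq0$ for all $z\in D$, satisfying for all $n\ge-1$ and $z\in D$ $$\tilde{\mathcal F}(qz;n+1)+\tilde{\mathcal G}(z;n+1)=\tilde{\mathcal F}(z;n)+\tilde{\mathcal G}(qz;n),$$ $$\tilde{\mathcal F}(z;n+1)\tilde{\mathcal G}(z;n+1)=\tilde{\mathcal F}(z;n)\tilde{\mathcal G}(z;n)+\tilde\mu(n)-\tilde\mu(n+1).$$ Define $\tilde{\mathcal P}_0\equiv1$ and, for $n\ge0$, $\tilde{\mathcal P}_{n+1}(z)=-\tilde{\mathcal G}(z;-1)\tilde{\mathcal P}_n(qz)+\tilde{\mathcal F}(z;n)\tilde{\mathcal P}_n(z)$. Then for every $n\ge0$: (i) $\tilde{\mathcal P}_n$ solves $$\tilde{\mathcal G}(qz;-1)\tilde{\mathcal P}_n(q^2z)-\big[\tilde{\mathcal F}(qz;n)+\tilde{\mathcal G}(z;n)\big]\tilde{\mathcal P}_n(qz)+\tilde{\mathcal F}(z;-1)\tilde{\mathcal P}_n(z)=0\quad(z\in D);$$ (ii) $-\tilde{\mathcal G}(z;-1)\tilde{\mathcal P}_{n+1}(qz)+\tilde{\mathcal G}(z;n)\tilde{\mathcal P}_{n+1}(z)=-\tilde\mu(n)\tilde{\mathcal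 P}_n(z)$; (iii) for $n\ge1$, $\tilde{\mathcal P}_{n+1}(z)+\tilde\mu(n-1)\tilde{\mathcal P}_{n-1}(z)=\big(\tilde{\mathcal F}(z;n)-\tilde{\mathcal G}(z;n-1)\big)\tilde{\mathcal P}_n(z)$. Moreover, if in addition there are constants $c_0(n),c_1(n)$ with $\tilde{\mathcal F}(z;n)-\tilde{\mathcal G}(z;n-1)=c_0(n)\chi(z)+c_1(n)$ for all $n\ge0$ and $z\in D$, then each $\tilde{\mathcal P}_n(z)$ is a polynomial in $\chi(z)$ of degree at most $n$.
   Context: $\chi(z)=\frac{z+z^{-1}}{2}$. The two displayed equations are the (q-version) Infeld–Hull factorization system: they express that, with $u_2(z)=-\tilde{\mathcal G}(z;-1)$, the operators $(u_2(z)\mathbf E_q+\tilde{\mathcal G}(z;n))(u_2(z)\mathbf E_q+\tilde{\mathcal F}(z;n))$ and $(u_2(z)\mathbf E_q+\tilde{\mathcal F}(z;n))(u_2(z)\mathbf E_q+\tilde{\mathcal G}(z;n))$ differ from consecutive members of one family of second-order operators by constants, where $(\mathbf E_qf)(z)=f(qz)$. *)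

From HB Require Import structures.
From mathcomp Require Import all_boot all_order all_algebra.
From mathcomp Require Import reals complex.
Set Implicit Arguments. Unset Strict Implicit. Unset Printing Implicit Defensive.
Import Order.TTheory GRing.Theory Num.Theory.
Local Open Scope ring_scope.

Definition chi (R : realType) (z : R[i]) : R[i] := (z + z^-1) / 2%:R.

(* tilde P_n, with F n z = tilde F(z;n), G n z = tilde G(z;n), n : int.
   P_0 = 1, P_{n+1}(z) = - G(z;-1) P_n(qz) + F(z;n) P_n(z). *)
Fixpoint Ptilde (R : realType) (q : R[i]) (F G : int -> R[i] -> R[i])
    (n : nat) (z : R[i]) {struct n} : R[i] :=
  match n with
  | 0%N => 1
  | m.+1 => - G (-1) z * Ptilde q F G m (q * z) + F (Posz m) z * Ptilde q F G m z
  end.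

From HB Require Import structures.
From mathcomp Require Import all_boot all_order all_algebra.
From mathcomp Require Import reals complex.
From mathcomp Require Import ring.
Set Implicit Arguments. Unset Strict Implicit. Unset Printing Implicit Defensive.
Import Order.TTheory GRing.Theory Num.Theory.
Local Open Scope ring_scope.

(* The compatibility conditions make [F(z;n) G(z;n) + mu(n)] independent of
   [n].  Writing [L_n] for the second-order q-operator of (i), the ladder
   expression of (ii) equals
     [G(z;-1) (L_n P_n)(z) + (F(z;n) G(z;n) - F(z;-1) G(z;-1)) P_n(z)],
   so (i) at level [n] gives (ii) at level [n].  Conversely
   [G(z;-1) (L_(n+1) P_(n+1))(z)] is a combination of the ladder expressions at
   [z] and [qz] and of the same conserved quantity, so (ii) at level [n] gives
   (i) at level [n+1]; this division by [G(z;-1)] is where its non-vanishing is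
   used.  Combining (ii) with the defining recurrence yields the three-term
   recurrence (iii), and a three-term recurrence with coefficients affine in
   [chi] produces polynomials in [chi]. *)

Lemma size_affine_poly {K : nzRingType} (a c : K) :
  (size (a *: 'X + c%:P)%R <= 2)%N.
Proof.
apply: leq_trans (size_polyD _ _) _; rewrite geq_max.
rewrite (leq_trans (size_scale_leq _ _)) ?size_polyX //.
exact: leq_trans (size_polyC_leq1 _) _.
Qed.

Lemma three_term_recurrence_poly (K : comNzRingType) (T : Type) (D : pred T)
    (x : T -> K) (s : nat -> T -> K) (a c b : nat -> K) :
  (forall z, z \in D -> s 0%N z = 1) ->
  (forall z, z \in D -> s 1%N z = a 0%N * x z + c 0%N) ->
  (forall n z, z \in D ->
     s n.+2 z = (a n.+1 * x z + c n.+1) * s n.+1 z - b n * s n z) ->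
  forall n, exists p : {poly K},
    (size p <= n.+1)%N /\ forall z, z \in D -> s n z = p.[x z].
Proof.
move=> s0 s1 sS n.
suff [p [p' [sz_p _ sp]]] : exists p p' : {poly K},
    [/\ (size p <= n.+1)%N, (size p' <= n.+2)%N &
        forall z, z \in D -> s n z = p.[x z] /\ s n.+1 z = p'.[x z]].
  by exists p; split=> // z /sp[].
elim: n => [|n [p [p' [sz_p sz_p' sp]]]].
  exists 1, (a 0%N *: 'X + (c 0%N)%:P); split.
  - by rewrite size_poly1.
  - exact: size_affine_poly.
  - move=> z Dz; rewrite s0 // s1 //.
    by rewrite !hornerE.
exists p', ((a n.+1 *: 'X + (c n.+1)%:P) * p' - b n *: p); split=> //.
- apply: leq_trans (size_polyD _ _) _; rewrite geq_max size_polyN; apply/andP; split.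
    apply: leq_trans (size_polyMleq _ _) _.
    by move: (leq_add (size_affine_poly (a n.+1) (c n.+1)) sz_p'); case: (_ + _)%N.
  by rewrite (leq_trans (size_scale_leq _ _)) // (leq_trans sz_p) // ltnW.
- move=> z Dz; have [sn sn1] := sp z Dz; split=> //.
  by rewrite sS // !hornerE sn sn1.
Qed.

Lemma PoszS (m : nat) : m.+1%:Z = m%:Z + 1.
Proof. by rewrite -addn1 PoszD. Qed.

Lemma Posz_subn1 (m : nat) : m.+1%:Z - 1 = m.
Proof. by rewrite PoszS addrK. Qed.

Section QLadder.

Variables (R : realType) (q : R[i]) (D : pred R[i]).
Variables (F G : int -> R[i] -> R[i]) (mu : int -> R[i]).

Hypothesis D_mulq : forall z, z \in D -> q * z \in D.
Hypothesis mu_m1 : mu (-1) = 0.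
Hypothesis G_m1_neq0 : forall z, z \in D -> G (-1) z != 0.
Hypothesis FG_sum : forall (n : int) z, -1 <= n -> z \in D ->
  F (n + 1) (q * z) + G (n + 1) z = F n z + G n (q * z).
Hypothesis FG_prod : forall (n : int) z, -1 <= n -> z \in D ->
  F (n + 1) z * G (n + 1) z = F n z * G n z + mu n - mu (n + 1).

Local Notation P := (Ptilde q F G).

Lemma PtildeS n z : P n.+1 z = - G (-1) z * P n (q * z) + F n z * P n z.
Proof. by []. Qed.

Lemma FG_sum_m1 z : z \in D ->
  F 0 (q * z) + G 0 z = F (-1) z + G (-1) (q * z).
Proof. by move=> Dz; have := FG_sum (lexx _) Dz; rewrite addNr. Qed.

Lemma FG_sum_nat (m : nat) z : z \in D ->
  F m.+1 (q * z) + G m.+1 z = F m z + G m (q * z).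
Proof. by move=> Dz; rewrite PoszS FG_sum. Qed.

Lemma FG_prod_conserved (m : nat) z : z \in D ->
  F m z * G m z = F (-1) z * G (-1) z - mu m.
Proof.
move=> Dz; elim: m => [|m IH].
  by rewrite (FG_prod (lexx _) Dz) mu_m1 addr0.
by rewrite PoszS FG_prod // IH; ring.
Qed.

Definition qdiff_residual (n : nat) (z : R[i]) : R[i] :=
  G (-1) (q * z) * P n (q ^+ 2 * z)
  - (F n (q * z) + G n z) * P n (q * z) + F (-1) z * P n z.

Definition ladder (n : nat) (z : R[i]) : R[i] :=
  - G (-1) z * P n.+1 (q * z) + G n z * P n.+1 z.

Lemma ladderE n z :
  ladder n z = G (-1) z * qdiff_residual n z
               + (F n z * G n z - F (-1) z * G (-1) z) * P n z.
Proof. by rewrite /ladder /qdiff_residual /= expr2 -mulrA; ring. Qed.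

Lemma qdiff_residualSE n z : z \in D ->
  G (-1) z * qdiff_residual n.+1 z =
    - G (-1) z * ladder n (q * z) + F n z * ladder n z
    + (F (-1) z * G (-1) z - F n z * G n z) * P n.+1 z.
Proof.
by move=> Dz; rewrite /qdiff_residual /ladder expr2 -mulrA FG_sum_nat //=; ring.
Qed.

Lemma ladder_of_residual n z : z \in D -> qdiff_residual n z = 0 ->
  ladder n z = - mu n * P n z.
Proof. by move=> Dz res0; rewrite ladderE res0 FG_prod_conserved //; ring. Qed.

Lemma qdiff_residual_eq0 n z : z \in D -> qdiff_residual n z = 0.
Proof.
elim: n z => [|n IH] z Dz.
  by rewrite /qdiff_residual /= !mulr1 FG_sum_m1 //; ring.
apply: (mulfI (G_m1_neq0 Dz)); rewrite mulr0 qdiff_residualSE //.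
rewrite !ladder_of_residual ?IH ?D_mulq // FG_prod_conserved //=; ring.
Qed.

Lemma Ptilde_ladder n z : z \in D -> ladder n z = - mu n * P n z.
Proof. by move=> Dz; rewrite ladder_of_residual ?qdiff_residual_eq0. Qed.

Lemma Ptilde_three_term n z : z \in D ->
  P n.+2 z + mu n * P n z = (F n.+1 z - G n z) * P n.+1 z.
Proof.
move=> Dz; rewrite [P n.+2 z]PtildeS.
by have /(canRL (addrK _)) -> := Ptilde_ladder n Dz; ring.
Qed.

End QLadder.

Theorem proposition2 (R : realType) (q : R[i]) (D : pred R[i])
    (F G : int -> R[i] -> R[i]) (mu : int -> R[i]) :
  q != 0 ->
  (forall z, z \in D -> z != 0) ->
  (forall z, z \in D -> q * z \in D) ->
  mu (-1) = 0 ->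
  (forall z, z \in D -> G (-1) z != 0) ->
  (forall (n : int) z, -1 <= n -> z \in D ->
     F (n + 1) (q * z) + G (n + 1) z = F n z + G n (q * z)) ->
  (forall (n : int) z, -1 <= n -> z \in D ->
     F (n + 1) z * G (n + 1) z = F n z * G n z + mu n - mu (n + 1)) ->
  let P := Ptilde q F G in
  (* (i) *)
  (forall (n : nat) z, z \in D ->
     G (-1) (q * z) * P n (q ^+ 2 * z)
     - (F n (q * z) + G n z) * P n (q * z) + F (-1) z * P n z = 0) /\
  (* (ii) *)
  (forall (n : nat) z, z \in D ->
     - G (-1) z * P n.+1 (q * z) + G n z * P n.+1 z = - mu n * P n z) /\
  (* (iii) *)
  (forall (n : nat) z, (1 <= n)%N -> z \in D ->
     P n.+1 z + mu (n%:Z - 1) * P n.-1 z = (F n z - G (n%:Z - 1) z) * P n z) /\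
  (* moreover *)
  (forall c0 c1 : nat -> R[i],
     (forall (n : nat) z, z \in D -> F n z - G (n%:Z - 1) z = c0 n * chi z + c1 n) ->
     forall n : nat, exists p : {poly R[i]},
       (size p <= n.+1)%N /\ forall z, z \in D -> P n z = p.[chi z]).
Proof.
(* [q != 0] and [0 \notin D] only make the paper's q-operators meaningful. *)
move=> _ _ Dq mu1 G_neq0 Hsum Hprod P.
have three_term := Ptilde_three_term Dq mu1 G_neq0 Hsum Hprod.
split; first exact: (qdiff_residual_eq0 Dq mu1 G_neq0 Hsum Hprod).
split; first exact: (Ptilde_ladder Dq mu1 G_neq0 Hsum Hprod).
split.
  by case=> [//|m] z _ Dz; rewrite Posz_subn1 three_term //.
move=> c0 c1 Hc.
apply: (@three_term_recurrence_poly _ _ D (@chi R) P c0 c1 (fun n => mu n)).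
- by [].
- by move=> z Dz; rewrite -(Hc 0%N z Dz) /P /= !mulr1 addrC.
- move=> n z Dz; rewrite -(Hc n.+1 z Dz) Posz_subn1 -three_term //.
  by rewrite addrK.
Qed.
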